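(* Let $a$ and $b$ be relatively prime integers with $1<a<b$ and $S=\langle a,b\rangle$. If $x\in I_{i,a}(S)$ for some $i\in\{1,\dots,a-1\}$, then either $x+a\in S$ or $x+a\in I_{i,a}(S)$.
   Context: $\langle a,b\rangle=\{\lambda_1a+\lambda_2b:\lambda_1,\lambda_2\in\mathbb{N}\}$. $I(S)$ is the set of isolated gaps of $S$ ($x\in\mathbb{N}\setminus S$ with $x-1,x+1\in S$), and $I_{i,a}(S)=\{s\in I(S):s\equiv i\pmod a\}$. *)

From mathcomp Require Import all_boot.
Set Implicit Arguments. Unset Strict Implicit. Unset Printing Implicit Defensive.

Definition in_semigroup2 (a b x : nat) : Prop :=
  exists l1 l2 : nat, x = l1 * a + l2 * b.

(* x is an isolated gap of S: x in N \ S, x-1 in S and x+1 in S.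
   (x-1 must be a natural number, so x >= 1.) *)
Definition isolated_gap (S : nat -> Prop) (x : nat) : Prop :=
  [/\ 0 < x, ~ S x, S x.-1 & S x.+1].

Definition I_ia (S : nat -> Prop) (i a x : nat) : Prop :=
  isolated_gap S x /\ x = i %[mod a].

(* S = <a,b> is closed under adding a, so (x - 1) + a and (x + 1) + a lie in S
   whenever x is an isolated gap; hence x + a is either in S or again an
   isolated gap, in the same residue class mod a. *)
From mathcomp Require Import all_boot.
From Stdlib Require Import Classical.

Lemma in_semigroup2_addl (a b x : nat) :
  in_semigroup2 a b x -> in_semigroup2 a b (x + a).
Proof.
by case=> [l1 [l2 ->]]; exists l1.+1, l2; rewrite mulSn addnC addnA.
Qed.

Lemma isolated_gap_shift (S : nat -> Prop) (c x : nat) :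
  (forall y, S y -> S (y + c)) ->
  isolated_gap S x -> ~ S (x + c) -> isolated_gap S (x + c).
Proof.
move=> S_addc [x_gt0 _ S_pred S_succ] notS_xc; split => //.
- by rewrite addn_gt0 x_gt0.
- by rewrite -(prednK x_gt0) addSn /=; exact: S_addc.
- by rewrite -addSn; exact: S_addc.
Qed.

Theorem lemma4p4 (a b i x : nat) :
  1 < a -> a < b -> coprime a b ->
  1 <= i <= a - 1 ->
  I_ia (in_semigroup2 a b) i a x ->
  in_semigroup2 a b (x + a) \/ I_ia (in_semigroup2 a b) i a (x + a).
Proof.
move=> _ _ _ _ [gap_x x_mod].
have [S_xa | notS_xa] := classic (in_semigroup2 a b (x + a)); [by left | right].
split; first exact: isolated_gap_shift (@in_semigroup2_addl a b) gap_x notS_xa.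
by rewrite modnDr.
Qed.
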